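(* Let $p$ be a probability distribution on $\mathbb{N}$ with generating function $f_p(z)=\sum_{n\geq 0}p_nz^n$ and mean $m=f_p'(1)\leq 1$, and let $f_q$ be the generating function of the progeny $q$ of $p$. Let $R\geq 1$ be the radius of convergence of the power series $f_p$. Let $r\in(0,R)$ and let $p^{(r)}$ be the distribution with generating function $f_{p^{(r)}}(z)=f_p(rz)/f_p(r)$, and suppose that its mean $m_r=rf_p'(r)/f_p(r)$ satisfies $m_r\leq 1$. Then the progeny $q^{(\rho)}$ of $p^{(r)}$ has generating function $$f_{q^{(\rho)}}(z)=\frac{f_q(\rho z)}{f_q(\rho)},\qquad\text{where } \rho \text{ is such that } r=f_q(\rho).$$
   Context: For a probability distribution $p$ on $\mathbb{N}=\{0,1,2,\ldots\}$, the Galton–Watson (branching) process governed by $p$ is the Markov chain $(Z_n)_{n\geq 0}$ on $\mathbb{N}$ with $Z_0=1$ and $Z_{n+1}=\sum_{k=1}^{Z_n}X_{n,k}$, where $(X_{n,k})$ are i.i.d. with distribution $p$. If the mean of $p$ is at most $1$, then $S=\sum_{n=0}^{\infty}Z_n$ is almost surely finite and its distribution $q$ on $\mathbb{N}^+$ is called the progeny of $p$; its generating function satisfies $f_q(z)=z f_p(f_q(z))$ for $|z|\leq 1$. *)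

From Stdlib Require Import Reals.
From Coquelicot Require Import Coquelicot.
Open Scope R_scope.

Definition is_distribution (p : nat -> R) : Prop :=
  (forall n, 0 <= p n) /\ is_series p 1.

Fixpoint conv_pow (p : nat -> R) (k : nat) : nat -> R :=
  match k with
  | O => fun n => if Nat.eqb n 0 then 1 else 0
  | S k' => fun n => sum_f_R0 (fun i => p i * conv_pow p k' (n - i)%nat) n
  end.

(* Transition probabilities of the Galton-Watson chain:
   P(Z_{t+1} = l | Z_t = j) = p^{*j}(l). *)
Definition gw_trans (p : nat -> R) (j l : nat) : R := conv_pow p j l.

(* gw_ext p k j s = P_j( Z_0 + ... + Z_{k-1} = s  and  Z_k = 0 )
   for the Galton-Watson chain started at Z_0 = j.  (In the recursive step the
   next state l can be restricted to l <= s - j since it contributes to the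
   remaining sum, or must be 0 when k' = 0.) *)
Fixpoint gw_ext (p : nat -> R) (k j s : nat) : R :=
  match k with
  | O => if andb (Nat.eqb j 0) (Nat.eqb s 0) then 1 else 0
  | S k' =>
      if Nat.leb j s
      then sum_f_R0 (fun l => gw_trans p j l * gw_ext p k' l (s - j)%nat) (s - j)
      else 0
  end.

(* Progeny q of p: q_n = P(S = n), S = sum_n Z_n, Z_0 = 1.
   Since every generation before extinction is nonempty, S = n iff
   Z_0 + ... + Z_{n-1} = n and Z_n = 0. *)
Definition progeny (p : nat -> R) (n : nat) : R := gw_ext p n 1 n.

Definition gf (p : nat -> R) (z : R) : R := PSeries p z.

Definition tilt (p : nat -> R) (r : R) (n : nat) : R := p n * r ^ n / gf p r.

From Stdlib Require Import Reals Lra Lia.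
From Coquelicot Require Import Coquelicot.
Open Scope R_scope.

(* Tilting reweights every family tree geometrically: a tree with s individuals
   having c_1, ..., c_s children has probability p_(c_1) ... p_(c_s), and since
   c_1 + ... + c_s = s - 1 its probability under p^(r) is r^(s-1) / f_p(r)^s
   times that.  Hence q^(r)_s = q_s rho^s / r with rho = r / f_p(r), that is
   f_(q^(r))(z) = f_q(rho z) / r.  Since m_r <= 1 and p_0 > 0, the tilted process
   dies out almost surely: P(Z_k = 0) = f^k(0) increases to a fixed point of f
   in [0, 1], while f(x) > x on [0, 1) by Bernoulli's inequality.  So q^(r) has
   total mass 1, which is f_q(rho) = r. *)

Lemma sum_f_R0_delta0 (a : nat -> R) N :
  sum_f_R0 (fun l => (if Nat.eqb l 0 then 1 else 0) * a l) N = a 0%nat.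
Proof. induction N as [|N IH]; simpl; [|rewrite IH]; ring. Qed.

Lemma sum_f_R0_pad (a : nat -> R) t M :
  (t <= M)%nat -> (forall l, (t < l)%nat -> a l = 0) -> sum_f_R0 a M = sum_f_R0 a t.
Proof.
  intros HtM Ha; induction HtM as [|M HtM IH]; [reflexivity|].
  rewrite tech5, IH, (Ha (S M)) by lia; ring.
Qed.

Lemma sum_f_R0_le_mono (a : nat -> R) N M :
  (forall n, 0 <= a n) -> (N <= M)%nat -> sum_f_R0 a N <= sum_f_R0 a M.
Proof.
  intros Ha HNM; induction HNM as [|M HNM IH]; [lra|].
  rewrite tech5; specialize (Ha (S M)); lra.
Qed.

Lemma sum_f_R0_shift (g : nat -> R) j N : (j <= N)%nat ->
  sum_f_R0 (fun s => if Nat.leb j s then g (s - j)%nat else 0) N = sum_f_R0 g (N - j).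
Proof.
  intros HjN; induction HjN as [|N HjN IH].
  - rewrite Nat.sub_diag; destruct j as [|j]; [reflexivity|].
    rewrite tech5, Nat.leb_refl, Nat.sub_diag, sum_eq_R0; [simpl; ring|].
    intros n Hn; replace (Nat.leb (S j) n) with false; [reflexivity|].
    symmetry; apply Nat.leb_gt; lia.
  - replace (S N - j)%nat with (S (N - j)) by lia.
    rewrite !tech5, IH; replace (Nat.leb j (S N)) with true by (symmetry; apply Nat.leb_le; lia).
    do 2 f_equal; lia.
Qed.

Lemma sum_f_R0_swap (u : nat -> nat -> R) M :
  sum_f_R0 (fun t => sum_f_R0 (fun l => u l t) M) M =
  sum_f_R0 (fun l => sum_f_R0 (fun t => u l t) M) M.
Proof.
  rewrite <- !sum_n_Reals.
  rewrite (sum_n_ext _ (fun t => sum_n (fun l => u l t) M))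
    by (intros; now rewrite sum_n_Reals).
  rewrite (sum_n_ext (fun l => sum_f_R0 _ M) (fun l => sum_n (fun t => u l t) M))
    by (intros; now rewrite sum_n_Reals).
  apply (sum_n_switch (G := R_AbelianMonoid) (fun t l => u l t)).
Qed.

Lemma sum_f_R0_le_series (a : nat -> R) l N :
  is_series a l -> (forall n, 0 <= a n) -> sum_f_R0 a N <= l.
Proof. intros Hl Ha; apply sum_incr; [apply is_series_Reals|]; assumption. Qed.

Lemma series_term_le (a : nat -> R) l n :
  is_series a l -> (forall n, 0 <= a n) -> a n <= l.
Proof.
  intros Hl Ha; apply Rle_trans with (sum_f_R0 a n); [|now apply sum_f_R0_le_series].
  destruct n as [|n]; simpl; [lra|]; pose proof (cond_pos_sum a n Ha); lra.
Qed.

Lemma weighted_sum_sub_le (c a : nat -> R) e L :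
  (forall l, 0 <= c l) -> sum_f_R0 c L <= 1 -> 0 <= e ->
  sum_f_R0 (fun l => c l * a l) L - e <= sum_f_R0 (fun l => c l * (a l - e)) L.
Proof.
  intros Hc Hc1 He; pose proof (cond_pos_sum c L Hc).
  rewrite (sum_eq (fun l => c l * (a l - e)) (fun l => c l * a l - c l * e)) by (intros; ring).
  rewrite minus_sum, <- (scal_sum c L e); nra.
Qed.

Lemma is_series_le0_terms_eq0 (a : nat -> R) l :
  is_series a l -> (forall n, 0 <= a n) -> l <= 0 -> forall n, a n = 0.
Proof. intros Hl Ha Hl0 n; pose proof (series_term_le a l n Hl Ha); specialize (Ha n); lra. Qed.

Lemma is_series_finite_support (a : nat -> R) N :
  (forall n, (N < n)%nat -> a n = 0) -> is_series a (sum_f_R0 a N).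
Proof.
  intros Ha; enough (H : is_lim_seq (sum_n a) (sum_f_R0 a N)) by exact H.
  apply (is_lim_seq_ext_loc (fun _ => sum_f_R0 a N)); [|apply is_lim_seq_const].
  exists N; intros n Hn; rewrite sum_n_Reals; symmetry; now apply sum_f_R0_pad.
Qed.

Lemma is_series_of_partial_bounds (a : nat -> R) l :
  (forall n, 0 <= a n) -> (forall N, sum_f_R0 a N <= l) ->
  (forall eps, 0 < eps -> exists N, l - eps < sum_f_R0 a N) -> is_series a l.
Proof.
  intros Ha Hup Hlow; enough (H : is_lim_seq (sum_n a) l) by exact H.
  apply is_lim_seq_spec; intros eps.
  destruct (Hlow eps (cond_pos eps)) as [N HN]; exists N; intros n Hn.
  rewrite sum_n_Reals; pose proof (sum_f_R0_le_mono a N n Ha Hn); pose proof (Hup n).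
  apply Rabs_def1; lra.
Qed.

Lemma exists_common_index (u : nat -> nat -> R) (b : nat -> R) L :
  (forall l N M, (N <= M)%nat -> u l N <= u l M) -> (forall l, exists N, b l < u l N) ->
  exists N, forall l, (l <= L)%nat -> b l < u l N.
Proof.
  intros Hu Hb; induction L as [|L [N1 H1]].
  - destruct (Hb 0%nat) as [N HN]; exists N; intros l Hl.
    now replace l with 0%nat by lia.
  - destruct (Hb (S L)) as [N2 H2]; exists (Nat.max N1 N2); intros l Hl.
    destruct (Nat.eq_dec l (S L)) as [->|Hne].
    + eapply Rlt_le_trans; [apply H2|apply Hu; lia].
    + eapply Rlt_le_trans; [apply H1; lia|apply Hu; lia].
Qed.

Lemma pow_ge_bernoulli x n : 0 <= x -> 1 + INR n * (x - 1) <= x ^ n.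
Proof.
  intros Hx; induction n as [|n IH]; [simpl; lra|].
  rewrite S_INR; simpl pow; pose proof (pos_INR n).
  assert (x * (1 + INR n * (x - 1)) <= x * x ^ n) by (apply Rmult_le_compat_l; lra).
  assert (0 <= INR n * ((x - 1) * (x - 1))) by (apply Rmult_le_pos; [lra|apply Rle_0_sqr]).
  nra.
Qed.

Lemma pow_gt_bernoulli x n : 0 <= x -> x <> 1 -> (2 <= n)%nat -> 1 + INR n * (x - 1) < x ^ n.
Proof.
  intros Hx Hx1 Hn; destruct n as [|[|n]]; try lia.
  pose proof (pow_ge_bernoulli x (S n) Hx) as IH.
  rewrite !S_INR in *; simpl pow in *.
  assert (x * (1 + (INR n + 1) * (x - 1)) <= x * (x * x ^ n)) by (apply Rmult_le_compat_l; lra).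
  assert (0 < (INR n + 1) * ((x - 1) * (x - 1))).
  { pose proof (pos_INR n); apply Rmult_lt_0_compat; [lra|apply Rsqr_pos_lt; lra]. }
  nra.
Qed.

Lemma gw_ext_lt p k j s : (s < j)%nat -> gw_ext p k j s = 0.
Proof.
  intros Hsj; destruct k as [|k]; simpl.
  - now destruct j as [|j]; [lia|].
  - replace (Nat.leb j s) with false; [reflexivity|].
    symmetry; apply Nat.leb_gt; lia.
Qed.

Lemma gw_ext_start0 p k s : gw_ext p k 0 s = if Nat.eqb s 0 then 1 else 0.
Proof.
  revert s; induction k as [|k IH]; intros s; [reflexivity|].
  cbn [gw_ext Nat.leb]; rewrite Nat.sub_0_r.
  exact (eq_trans (sum_f_R0_delta0 (fun l => gw_ext p k l s) s) (IH s)).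
Qed.

Lemma gw_ext_succ p k j s :
  gw_ext p (S k) j s =
  if Nat.leb j s
  then sum_f_R0 (fun l => conv_pow p j l * gw_ext p k l (s - j)) (s - j) else 0.
Proof. reflexivity. Qed.

Lemma gw_ext_succ_stable p k j s : (s <= k)%nat -> gw_ext p (S k) j s = gw_ext p k j s.
Proof.
  revert j s; induction k as [|k IH]; intros j s Hs.
  - replace s with 0%nat by lia; destruct j; simpl; [ring|reflexivity].
  - destruct j as [|j]; [now rewrite !gw_ext_start0|].
    rewrite !gw_ext_succ; destruct (Nat.leb (S j) s) eqn:E; [|reflexivity].
    apply Nat.leb_le in E; apply sum_eq; intros l _; rewrite IH by lia; reflexivity.
Qed.

Lemma gw_ext_stable p k j s : (s <= k)%nat -> gw_ext p k j s = gw_ext p s j s.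
Proof.
  intros Hsk; induction Hsk as [|k Hsk IH]; [reflexivity|].
  now rewrite gw_ext_succ_stable.
Qed.

Definition gw_ext_cum (p : nat -> R) (k j N : nat) : R := sum_f_R0 (gw_ext p k j) N.

Lemma gw_ext_cum_0 p j N : gw_ext_cum p 0 j N = if Nat.eqb j 0 then 1 else 0.
Proof.
  unfold gw_ext_cum; induction N as [|N IH]; [now destruct j|].
  rewrite tech5, IH; destruct j; simpl; ring.
Qed.

Lemma gw_ext_cum_succ p k j M :
  gw_ext_cum p (S k) j (M + j) =
  sum_f_R0 (fun l => conv_pow p j l * gw_ext_cum p k l M) M.
Proof.
  set (step t := sum_f_R0 (fun l => conv_pow p j l * gw_ext p k l t) t).
  unfold gw_ext_cum.
  rewrite (sum_eq _ (fun s => if Nat.leb j s then step (s - j)%nat else 0))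
    by (intros; apply gw_ext_succ).
  rewrite sum_f_R0_shift, Nat.add_sub by lia.
  rewrite (sum_eq step (fun t => sum_f_R0 (fun l => conv_pow p j l * gw_ext p k l t) M)).
  2:{ intros t Ht; symmetry; apply sum_f_R0_pad; [lia|].
      intros l Hl; rewrite gw_ext_lt by lia; ring. }
  rewrite sum_f_R0_swap; apply sum_eq; intros l _.
  rewrite scal_sum; apply sum_eq; intros; ring.
Qed.

Section NonnegOffspring.

Variable p : nat -> R.
Hypothesis p_ge0 : forall n, 0 <= p n.

Lemma conv_pow_ge0 j l : 0 <= conv_pow p j l.
Proof.
  revert l; induction j as [|j IH]; intros l; simpl.
  - destruct (Nat.eqb l 0); lra.
  - apply cond_pos_sum; intros; apply Rmult_le_pos; auto.
Qed.

Lemma gw_ext_ge0 k j s : 0 <= gw_ext p k j s.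
Proof.
  revert j s; induction k as [|k IH]; intros j s; simpl.
  - destruct (andb _ _); lra.
  - destruct (Nat.leb j s); [|lra].
    apply cond_pos_sum; intros; apply Rmult_le_pos; [apply conv_pow_ge0|apply IH].
Qed.

Lemma gw_ext_le_succ k j s : gw_ext p k j s <= gw_ext p (S k) j s.
Proof.
  revert j s; induction k as [|k IH]; intros j s.
  - cbn [gw_ext]; destruct (Nat.eqb j 0) eqn:Ej, (Nat.eqb s 0) eqn:Es; cbn [andb];
      try (apply (gw_ext_ge0 1)).
    apply Nat.eqb_eq in Ej, Es; subst; simpl; lra.
  - rewrite !gw_ext_succ; destruct (Nat.leb j s); [|lra].
    apply sum_Rle; intros; apply Rmult_le_compat_l; [apply conv_pow_ge0|apply IH].
Qed.

Lemma gw_ext_mono k k' j s : (k <= k')%nat -> gw_ext p k j s <= gw_ext p k' j s.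
Proof.
  intros Hkk; induction Hkk as [|k' Hkk IH]; [lra|].
  eapply Rle_trans; [apply IH|apply gw_ext_le_succ].
Qed.

Lemma gw_ext_le_diag k j s : gw_ext p k j s <= gw_ext p s j s.
Proof.
  destruct (Nat.le_gt_cases k s).
  - now apply gw_ext_mono.
  - rewrite (gw_ext_stable p k) by lia; lra.
Qed.

Lemma gw_ext_cum_mono k j N M : (N <= M)%nat -> gw_ext_cum p k j N <= gw_ext_cum p k j M.
Proof. apply sum_f_R0_le_mono; intros; apply gw_ext_ge0. Qed.

End NonnegOffspring.

Fixpoint extinction_prob (p : nat -> R) (k : nat) : R :=
  match k with O => 0 | S k => gf p (extinction_prob p k) end.

Section Distribution.

Variable p : nat -> R.
Hypothesis p_distr : is_distribution p.

Let p_ge0 : forall n, 0 <= p n := proj1 p_distr.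

Lemma is_series_gf x : 0 <= x <= 1 -> is_series (fun n => p n * x ^ n) (gf p x).
Proof.
  intros Hx; apply Series_correct.
  apply (@ex_series_le R_AbsRing R_CompleteNormedModule _ p); [|now exists 1; apply p_distr].
  intros n; change (norm (p n * x ^ n)) with (Rabs (p n * x ^ n)).
  pose proof (pow_le x n (proj1 Hx)); pose proof (pow_incr x 1 n Hx) as Hxn.
  rewrite pow1 in Hxn; pose proof (p_ge0 n).
  rewrite Rabs_pos_eq by (apply Rmult_le_pos; lra); nra.
Qed.

Lemma gf_ge0 x : 0 <= x <= 1 -> 0 <= gf p x.
Proof.
  intros Hx; apply (Rle_trans _ (p 0%nat * x ^ 0)); [simpl; rewrite Rmult_1_r; apply p_ge0|].
  apply (series_term_le _ _ 0 (is_series_gf x Hx)).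
  intros n; apply Rmult_le_pos; [apply p_ge0|apply pow_le; lra].
Qed.

Lemma gf_1 : gf p 1 = 1.
Proof.
  apply is_series_unique; eapply is_series_ext; [|apply p_distr].
  intros n; simpl; rewrite pow1; ring.
Qed.

Lemma gf_le x y : 0 <= x <= y -> y <= 1 -> gf p x <= gf p y.
Proof.
  intros Hxy Hy; apply Series_le; [|eexists; apply is_series_gf; lra].
  intros n; pose proof (p_ge0 n); pose proof (pow_le x n (proj1 Hxy)).
  split; [nra|]; apply Rmult_le_compat_l; [lra|apply pow_incr; lra].
Qed.

Lemma gf_le1 x : 0 <= x <= 1 -> gf p x <= 1.
Proof. intros Hx; rewrite <- gf_1; apply gf_le; lra. Qed.

Lemma CV_radius_ge1 : Rbar_le 1 (CV_radius p).
Proof.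
  apply (proj1 (CV_radius_bounded p)); exists 1; intros n.
  rewrite pow1, Rmult_1_r, Rabs_pos_eq by apply p_ge0.
  apply (series_term_le p 1 n (proj2 p_distr) p_ge0).
Qed.

Lemma is_series_conv_pow_gf x j : 0 <= x <= 1 ->
  is_series (fun l => conv_pow p j l * x ^ l) (gf p x ^ j).
Proof.
  intros Hx; induction j as [|j IH].
  - pose proof (is_series_finite_support (fun l => (if Nat.eqb l 0 then 1 else 0) * x ^ l) 0)
      as H0; simpl in H0 |- *; rewrite Rmult_1_r in H0.
    apply H0; intros [|n] Hn; [lia|simpl; ring].
  - eapply is_series_ext; [|apply (is_series_mult_pos _ _ _ _ (is_series_gf x Hx) IH)].
    + intros n; simpl conv_pow; rewrite Rmult_comm, scal_sum; apply sum_eq; intros i Hi.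
      replace (x ^ n) with (x ^ i * x ^ (n - i)) by (rewrite <- pow_add; f_equal; lia).
      ring.
    + intros n; apply Rmult_le_pos; [apply p_ge0|apply pow_le; lra].
    + intros n; apply Rmult_le_pos; [apply conv_pow_ge0, p_ge0|apply pow_le; lra].
Qed.

Lemma sum_conv_pow_le1 j M : sum_f_R0 (conv_pow p j) M <= 1.
Proof.
  pose proof (is_series_conv_pow_gf 1 j ltac:(lra)) as H; rewrite gf_1, pow1 in H.
  rewrite (sum_eq _ (fun l => conv_pow p j l * 1 ^ l)) by (intros; rewrite pow1; ring).
  apply (sum_f_R0_le_series _ _ M H).
  intros n; rewrite pow1, Rmult_1_r; apply conv_pow_ge0, p_ge0.
Qed.

Lemma gw_ext_cum_le1 k j N : gw_ext_cum p k j N <= 1.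
Proof.
  revert j N; induction k as [|k IH]; intros j N.
  - rewrite gw_ext_cum_0; destruct (Nat.eqb j 0); lra.
  - destruct (Nat.le_gt_cases j N).
    + replace N with (N - j + j)%nat by lia; rewrite gw_ext_cum_succ.
      apply (Rle_trans _ (sum_f_R0 (conv_pow p j) (N - j))); [|apply sum_conv_pow_le1].
      apply sum_Rle; intros l _; pose proof (conv_pow_ge0 p p_ge0 j l).
      pose proof (IH l (N - j)%nat); nra.
    + unfold gw_ext_cum; rewrite sum_eq_R0; [lra|].
      intros; apply gw_ext_lt; lia.
Qed.

Lemma sum_progeny_le1 N : sum_f_R0 (progeny p) N <= 1.
Proof.
  rewrite (sum_eq _ (gw_ext p N 1)); [apply gw_ext_cum_le1|].
  intros s Hs; unfold progeny; symmetry; now apply gw_ext_stable.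
Qed.

Lemma extinction_prob_bounds k : 0 <= extinction_prob p k <= 1.
Proof.
  induction k as [|k IH]; simpl; [lra|].
  split; [apply gf_ge0|apply gf_le1]; exact IH.
Qed.

Lemma extinction_prob_le_succ k : extinction_prob p k <= extinction_prob p (S k).
Proof.
  induction k as [|k IH]; [apply gf_ge0; lra|].
  pose proof (extinction_prob_bounds k); pose proof (extinction_prob_bounds (S k)).
  apply gf_le; [split|]; tauto.
Qed.

Lemma gw_ext_cum_lower k j eps : 0 < eps ->
  exists N, extinction_prob p k ^ j - eps < gw_ext_cum p k j N.
Proof.
  revert j eps; induction k as [|k IH]; intros j eps Heps.
  - exists 0%nat; rewrite gw_ext_cum_0; destruct j; simpl; lra.
  - (* Conditioning on Z_1: P_j(Z_(k+1) = 0) = E_j[x ^ Z_1] = f(x)^j with x = P(Z_k = 0). *)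
    set (x := extinction_prob p k).
    assert (Hx : 0 <= x <= 1) by apply extinction_prob_bounds.
    destruct (proj1 (is_series_Reals _ _) (is_series_conv_pow_gf x j Hx) (eps / 2))
      as [L HL]; [lra|].
    specialize (HL L (le_n L)); unfold R_dist in HL; apply Rabs_def2 in HL.
    destruct (exists_common_index (gw_ext_cum p k) (fun l => x ^ l - eps / 2) L) as [M HM].
    { intros; now apply gw_ext_cum_mono. }
    { intros l; apply IH; lra. }
    set (N := Nat.max M L).
    assert (HN : forall l, (l <= L)%nat -> x ^ l - eps / 2 < gw_ext_cum p k l N).
    { intros l Hl; eapply Rlt_le_trans; [now apply HM|].
      apply gw_ext_cum_mono; [exact p_ge0|lia]. }
    exists (N + j)%nat; rewrite gw_ext_cum_succ.
    apply (Rlt_le_trans _ (sum_f_R0 (fun l => conv_pow p j l * gw_ext_cum p k l N) L)).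
    + apply (Rlt_le_trans _ (sum_f_R0 (fun l => conv_pow p j l * x ^ l) L - eps / 2)).
      { simpl extinction_prob; fold x; lra. }
      eapply Rle_trans; [apply weighted_sum_sub_le; [|apply sum_conv_pow_le1|lra]|].
      { apply conv_pow_ge0, p_ge0. }
      apply sum_Rle; intros l Hl; apply Rmult_le_compat_l; [apply conv_pow_ge0, p_ge0|].
      left; now apply HN.
    + apply sum_f_R0_le_mono; [|lia]; intros l.
      apply Rmult_le_pos; [apply conv_pow_ge0, p_ge0|apply cond_pos_sum].
      intros; apply gw_ext_ge0, p_ge0.
Qed.

Variable m : R.
Hypothesis p_mean : is_series (fun n => INR n * p n) m.
Hypothesis mean_le1 : m <= 1.

Lemma supported_01 : (forall n, (2 <= n)%nat -> p n = 0) -> p 0%nat + p 1%nat = 1.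
Proof.
  intros Hp2; pose proof (is_series_finite_support p 1 (fun n Hn => Hp2 n Hn)) as H.
  simpl in H; rewrite <- (is_series_unique _ _ H); exact (is_series_unique _ _ (proj2 p_distr)).
Qed.

Lemma p0_pos_of_mean_le1 : p 1%nat <> 1 -> 0 < p 0%nat.
Proof.
  intros Hp1; destruct (p_ge0 0) as [|Hp0]; [assumption|exfalso].
  set (t n := INR n * p n - p n).
  assert (Ht : is_series t (m - 1)) by exact (is_series_minus _ _ _ _ p_mean (proj2 p_distr)).
  assert (Ht0 : forall n, 0 <= t n).
  { intros [|n]; unfold t; [rewrite <- Hp0; simpl; lra|].
    rewrite S_INR; pose proof (pos_INR n); pose proof (p_ge0 (S n)); nra. }
  pose proof (is_series_le0_terms_eq0 t _ Ht Ht0 ltac:(lra)) as Hz.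
  enough (p 0%nat + p 1%nat = 1) by lra.
  apply supported_01; intros n Hn; specialize (Hz n); unfold t in Hz.
  assert ((INR n - 1) * p n = 0) as Hz' by lra.
  apply Rmult_integral in Hz' as [Hn1|]; [|assumption].
  apply le_INR in Hn; simpl in Hn; lra.
Qed.

Hypothesis p0_pos : 0 < p 0%nat.

Lemma gf_gt_id x : 0 <= x < 1 -> x < gf p x.
Proof.
  intros Hx; apply Rnot_le_lt; intros Hfx.
  (* If f(x) <= x, the nonnegative Bernoulli gaps sum to at most (x - 1)(1 - m) <= 0,
     which confines p to {0, 1}. *)
  set (gap n := p n * x ^ n - p n - (x - 1) * (INR n * p n)).
  assert (Hgap : is_series gap (gf p x - 1 - (x - 1) * m))
    by exact (is_series_minus _ _ _ _ (is_series_minus _ _ _ _ (is_series_gf x ltac:(lra))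
               (proj2 p_distr)) (is_series_scal_l (x - 1) _ _ p_mean)).
  assert (Hgap_eq : forall n, gap n = p n * (x ^ n - (1 + INR n * (x - 1))))
    by (intros; unfold gap; ring).
  assert (Hgap0 : forall n, 0 <= gap n).
  { intros n; rewrite Hgap_eq; apply Rmult_le_pos; [apply p_ge0|].
    pose proof (pow_ge_bernoulli x n ltac:(lra)); lra. }
  pose proof (is_series_le0_terms_eq0 gap _ Hgap Hgap0 ltac:(nra)) as Hz.
  assert (Hp2 : forall n, (2 <= n)%nat -> p n = 0).
  { intros n Hn; specialize (Hz n); rewrite Hgap_eq in Hz.
    pose proof (pow_gt_bernoulli x n ltac:(lra) ltac:(lra) Hn).
    apply Rmult_integral in Hz as [|]; [assumption|lra]. }
  pose proof (is_series_finite_support (fun n => p n * x ^ n) 1) as Hpoly; simpl in Hpoly.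
  assert (Hfx_eq : gf p x = p 0%nat * 1 + p 1%nat * (x * 1)).
  { apply is_series_unique, Hpoly; intros n Hn; rewrite Hp2 by lia; ring. }
  pose proof (supported_01 Hp2); nra.
Qed.

Lemma extinction_prob_cv : is_lim_seq (extinction_prob p) 1.
Proof.
  destruct (ex_finite_lim_seq_incr _ 1 extinction_prob_le_succ
              (fun k => proj2 (extinction_prob_bounds k))) as [l Hl].
  assert (Hl1 : l <= 1).
  { apply (is_lim_seq_le (extinction_prob p) (fun _ => 1) l 1); [|exact Hl|apply is_lim_seq_const].
    intros; apply extinction_prob_bounds. }
  assert (Hl0 : 0 <= l).
  { apply (is_lim_seq_le (fun _ => 0) (extinction_prob p) 0 l); [|apply is_lim_seq_const|exact Hl].
    intros; apply extinction_prob_bounds. }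
  destruct (Rle_lt_or_eq_dec l 1 Hl1) as [Hlt|<-]; [exfalso|exact Hl].
  assert (Hfix : gf p l = l).
  { assert (Hcont : continuity_pt (gf p) l).
    { apply PSeries_continuity; eapply Rbar_lt_le_trans; [|apply CV_radius_ge1].
      rewrite Rabs_pos_eq; simpl; lra. }
    pose proof (is_lim_seq_continuous _ _ _ Hcont Hl) as Himg.
    pose proof (proj1 (is_lim_seq_incr_1 _ _) Hl) as Hshift.
    apply is_lim_seq_unique in Himg, Hshift; simpl in Hshift.
    rewrite Hshift in Himg; now injection Himg. }
  pose proof (gf_gt_id l); lra.
Qed.

Lemma is_series_progeny : is_series (progeny p) 1.
Proof.
  apply is_series_of_partial_bounds; [intros; apply gw_ext_ge0, p_ge0|apply sum_progeny_le1|].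
  intros eps Heps.
  destruct (proj2 (is_lim_seq_spec _ _) extinction_prob_cv (mkposreal (eps / 2) ltac:(lra)))
    as [k Hk]; specialize (Hk k (le_n k)); simpl in Hk; apply Rabs_def2 in Hk.
  destruct (gw_ext_cum_lower k 1 (eps / 2) ltac:(lra)) as [N HN]; exists N.
  rewrite pow_1 in HN.
  enough (gw_ext_cum p k 1 N <= sum_f_R0 (progeny p) N) by lra.
  apply sum_Rle; intros; apply gw_ext_le_diag, p_ge0.
Qed.

End Distribution.

Section Tilt.

Variables (p : nat -> R) (r : R).
Hypothesis gf_r_neq0 : gf p r <> 0.

Lemma conv_pow_tilt j l : conv_pow (tilt p r) j l = conv_pow p j l * r ^ l / gf p r ^ j.
Proof.
  revert l; induction j as [|j IH]; intros l.
  - simpl; destruct (Nat.eqb l 0) eqn:E; [apply Nat.eqb_eq in E; subst; simpl|]; field.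
  - simpl conv_pow; unfold Rdiv; rewrite Rmult_assoc, Rmult_comm, scal_sum.
    apply sum_eq; intros i Hi; rewrite IH; unfold tilt.
    replace (r ^ l) with (r ^ i * r ^ (l - i)) by (rewrite <- pow_add; f_equal; lia).
    simpl; field; split; [apply pow_nonzero|]; assumption.
Qed.

(* Multiplied by [r ^ j] so that no exponent [s - j] occurs. *)
Lemma gw_ext_tilt k j s :
  r ^ j * gw_ext (tilt p r) k j s = gw_ext p k j s * r ^ s / gf p r ^ s.
Proof.
  assert (Hpow : forall n, gf p r ^ n <> 0) by (intros; apply pow_nonzero; assumption).
  revert j s; induction k as [|k IH]; intros j s.
  - simpl; destruct (Nat.eqb j 0) eqn:Ej, (Nat.eqb s 0) eqn:Es; simpl;
      try (field; apply Hpow).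
    apply Nat.eqb_eq in Ej, Es; subst; simpl; field.
  - rewrite !gw_ext_succ; destruct (Nat.leb j s) eqn:E; [|field; apply Hpow].
    apply Nat.leb_le in E.
    replace (r ^ s) with (r ^ j * r ^ (s - j)) by (rewrite <- pow_add; f_equal; lia).
    replace (gf p r ^ s) with (gf p r ^ j * gf p r ^ (s - j))
      by (rewrite <- pow_add; f_equal; lia).
    unfold Rdiv; rewrite scal_sum, Rmult_assoc, (Rmult_comm (sum_f_R0 _ _)), scal_sum.
    apply sum_eq; intros l _; rewrite conv_pow_tilt.
    transitivity (conv_pow p j l / gf p r ^ j * r ^ j * (r ^ l * gw_ext (tilt p r) k l (s - j))).
    { field; apply Hpow. }
    rewrite IH; field; split; apply Hpow.
Qed.

Hypothesis r_neq0 : r <> 0.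

Lemma progeny_tilt n : progeny (tilt p r) n = progeny p n * (r / gf p r) ^ n / r.
Proof.
  apply (Rmult_eq_reg_l r); [|assumption].
  rewrite <- (pow_1 r) at 1; unfold progeny; rewrite gw_ext_tilt.
  unfold Rdiv; rewrite Rpow_mult_distr, pow_inv; field; split; [|apply pow_nonzero]; assumption.
Qed.

Lemma gf_progeny_tilt z : gf (progeny (tilt p r)) z = gf (progeny p) (r / gf p r * z) / r.
Proof.
  unfold gf, PSeries; transitivity (Series (fun n => progeny p n * (r / gf p r * z) ^ n) * / r);
    [|reflexivity].
  rewrite <- Series_scal_r; apply Series_ext; intros n.
  rewrite progeny_tilt, Rpow_mult_distr; unfold Rdiv; ring.
Qed.

Lemma is_series_progeny_tilt :
  is_series (progeny (tilt p r)) 1 -> is_series (fun n => progeny p n * (r / gf p r) ^ n) r.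
Proof.
  intros Hq.
  assert (Hr : is_series (fun n => r * progeny (tilt p r) n) (r * 1))
    by exact (is_series_scal_l r _ _ Hq).
  rewrite Rmult_1_r in Hr; eapply is_series_ext; [|exact Hr].
  intros n; change (r * progeny (tilt p r) n = progeny p n * (r / gf p r) ^ n).
  rewrite progeny_tilt; field; assumption.
Qed.

End Tilt.

Lemma is_series_gf_lt_radius p x : Rbar_lt (Rabs x) (CV_radius p) ->
  is_series (fun n => p n * x ^ n) (gf p x).
Proof. intros Hx; apply is_pseries_R, PSeries_correct, CV_radius_inside, Hx. Qed.

Lemma gf_ge_p0 p x : (forall n, 0 <= p n) -> 0 <= x -> Rbar_lt (Rabs x) (CV_radius p) ->
  p 0%nat <= gf p x.
Proof.
  intros Hp Hx Hrad; rewrite <- (Rmult_1_r (p 0%nat)); change 1 with (x ^ 0).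
  apply (series_term_le _ _ 0 (is_series_gf_lt_radius p x Hrad)).
  intros n; apply Rmult_le_pos; [apply Hp|apply pow_le, Hx].
Qed.

Lemma tilt_is_distribution p r : (forall n, 0 <= p n) -> 0 <= r ->
  Rbar_lt (Rabs r) (CV_radius p) -> 0 < gf p r -> is_distribution (tilt p r).
Proof.
  intros Hp Hr Hrad Hfr; split.
  - intros n; unfold tilt; apply Rdiv_le_0_compat; [|assumption].
    apply Rmult_le_pos; [apply Hp|apply pow_le, Hr].
  - rewrite <- (Rinv_r (gf p r)) by lra.
    exact (is_series_scal_r (/ gf p r) _ _ (is_series_gf_lt_radius p r Hrad)).
Qed.

Lemma tilt_mean p r : Rbar_lt (Rabs r) (CV_radius p) ->
  is_series (fun n => INR n * tilt p r n) (r * Derive (gf p) r / gf p r).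
Proof.
  intros Hrad.
  pose proof (is_pseries_incr_1 _ _ _ (is_pseries_derive p r Hrad)) as H.
  apply is_pseries_R in H; eapply is_series_ext; [|exact (is_series_scal_r (/ gf p r) _ _ H)].
  intros n; match goal with |- ?a = ?b => change (@eq R a b) end.
  destruct n as [|n]; unfold tilt, PS_incr_1, PS_derive; simpl;
    [change (zero : R) with 0|unfold Rdiv]; ring.
Qed.

Theorem proposition2 (p : nat -> R) (r : R) :
  is_distribution p ->
  p 1%nat <> 1 ->
  ex_series (fun n => INR n * p n) ->
  Series (fun n => INR n * p n) <= 1 ->
  0 < r ->
  Rbar_lt (Finite r) (CV_radius p) ->
  r * Derive (gf p) r / gf p r <= 1 ->
  exists rho : R,
    0 < rho /\ ex_pseries (progeny p) rho /\ gf (progeny p) rho = r /\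
    forall z : R, -1 <= z <= 1 ->
      gf (progeny (tilt p r)) z = gf (progeny p) (rho * z) / gf (progeny p) rho.
Proof.
  intros Hp Hp1 Hmean Hmean1 Hr Hrad Hmean_r.
  pose proof (p0_pos_of_mean_le1 p Hp _ (Series_correct _ Hmean) Hmean1 Hp1) as Hp0.
  assert (Hrad' : Rbar_lt (Rabs r) (CV_radius p)) by (rewrite Rabs_pos_eq by lra; exact Hrad).
  pose proof (gf_ge_p0 p r (proj1 Hp) ltac:(lra) Hrad') as Hfr.
  assert (Htilt0 : 0 < tilt p r 0%nat).
  { unfold tilt; simpl; rewrite Rmult_1_r; apply Rdiv_lt_0_compat; lra. }
  pose proof (is_series_progeny _ (tilt_is_distribution p r (proj1 Hp) ltac:(lra) Hrad' ltac:(lra))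
                _ (tilt_mean p r Hrad') Hmean_r Htilt0) as Hq_tilt.
  pose proof (is_series_progeny_tilt p r ltac:(lra) ltac:(lra) Hq_tilt) as Hq.
  assert (Hfq : gf (progeny p) (r / gf p r) = r) by exact (is_series_unique _ _ Hq).
  exists (r / gf p r); repeat split.
  - apply Rdiv_lt_0_compat; lra.
  - exists r; now apply is_pseries_R.
  - exact Hfq.
  - intros z _; rewrite Hfq; apply gf_progeny_tilt; lra.
Qed.
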